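(* Let $\tilde\rho:\mathbb Z_{(2)}[[x,y,z]]\to\mathbb Z_{(2)}[[t]]$ be the ring morphism with $\tilde\rho(x)=t^6+t^{31}$, $\tilde\rho(y)=t^8$, $\tilde\rho(z)=t^{10}$ and $\tilde P=\ker\tilde\rho$. Then $\varphi=z^2+x^2y+y^5z^3\notin \tilde P+2\,\mathbb Z_{(2)}[[x,y,z]]$. Consequently, the kernel $\overline P$ of the analogous morphism $(\mathbb Z/2\mathbb Z)[[x,y,z]]\to(\mathbb Z/2\mathbb Z)[[t]]$ is not contained in the image of $\tilde P$ in $(\mathbb Z/2\mathbb Z)[[x,y,z]]$.
   Context: $\mathbb Z_{(2)}$ denotes the localization of $\mathbb Z$ at the prime ideal $(2)$. The morphism $(\mathbb Z/2\mathbb Z)[[x,y,z]]\to(\mathbb Z/2\mathbb Z)[[t]]$ sends $x\mapsto t^6+t^{31}$, $y\mapsto t^8$, $z\mapsto t^{10}$. *)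

From HB Require Import structures.
From mathcomp Require Import all_boot all_order all_algebra.
Set Implicit Arguments. Unset Strict Implicit. Unset Printing Implicit Defensive.
Import Order.TTheory GRing.Theory Num.Theory.
Local Open Scope ring_scope.

(* A formal power series in x,y,z with coefficients in R, given by its
   coefficient function: f i j k = coefficient of x^i y^j z^k. *)
Definition series3 (R : Type) := nat -> nat -> nat -> R.

(* Z_(2) = rationals with odd denominator (localization of Z at (2)),
   viewed inside Q. *)
Definition inZ2loc (q : rat) : bool := odd (absz (denq q)).

Definition isZ2series (f : series3 rat) : Prop := forall i j k, inZ2loc (f i j k).

Definition mono3 (R : pzRingType) (a b c : nat) : series3 R :=
  fun i j k => ((i == a) && (j == b) && (k == c))%:R.

Definition phi (R : pzRingType) : series3 R :=
  fun i j k => mono3 R 0 0 2 i j k + mono3 R 2 1 0 i j k + mono3 R 0 5 3 i j k.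

(* The substitution morphism x |-> t^6 + t^31, y |-> t^8, z |-> t^10:
   rho f n = coefficient of t^n in
     sum_{i,j,k} f i j k (t^6+t^31)^i t^(8j) t^(10k)
           = sum_{i,j,k} sum_{l<=i} C(i,l) f i j k t^(6(i-l)+31l+8j+10k).
   Only indices i,j,k <= n can contribute, so the sum is finite. *)
Definition rho (R : pzRingType) (f : series3 R) : nat -> R :=
  fun n => \sum_(i < n.+1) \sum_(j < n.+1) \sum_(k < n.+1) \sum_(l < i.+1)
     if (6 * (i - l) + 31 * l + 8 * j + 10 * k == n)%N
     then 'C(i, l)%:R * f i j k else 0.

Definition inPtilde (f : series3 rat) : Prop :=
  isZ2series f /\ forall n, rho f n = 0.

Definition inPbar (h : series3 'F_2) : Prop := forall n, rho h n = 0.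

(* Reduction Z_(2) -> Z/2Z (for q = a/b with b odd, q mod 2 = a mod 2). *)
Definition red2 (q : rat) : 'F_2 := (numq q)%:~R.

From mathcomp Require Import all_boot all_order all_algebra zify.
Import GRing.Theory Num.Theory.
Local Open Scope ring_scope.

(* In [rho f] the coefficient of [t^45] is [2 f_{2,1,0}]: the exponent
   [6 (i - l) + 31 l + 8 j + 10 k = 45] is only reached by [x^2 y], through
   the cross term of [(t^6 + t^31)^2].  So elements of [P~] have no [x^2 y]
   term, and [phi = f + 2 g] would force [g_{2,1,0} = 1/2], not in [Z_(2)].
   Over [F_2] the cross term vanishes and [phi] lies in [P-bar], but its
   [x^2 y] coefficient [1] is not the reduction [0] of any element of [P~]. *)

Lemma big_ord_pred1 {R : nmodType} {N} {F : 'I_N -> R} {a} (aN : (a < N)%N) :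
  (forall i : 'I_N, i != a :> nat -> F i = 0) -> \sum_i F i = F (Ordinal aN).
Proof. by move=> F0; rewrite (bigD1 (Ordinal aN)) //= big1 ?addr0. Qed.

Lemma rhoD (R : pzRingType) (f g : series3 R) n :
  rho (fun i j k => f i j k + g i j k) n = rho f n + rho g n.
Proof.
rewrite /rho -big_split; apply: eq_bigr => i _.
rewrite -big_split; apply: eq_bigr => j _.
rewrite -big_split; apply: eq_bigr => k _.
rewrite -big_split; apply: eq_bigr => l _.
by case: ifP => _ /=; rewrite ?mulrDr ?addr0.
Qed.

Lemma rho_mono3 (R : pzRingType) a b c n :
  rho (mono3 R a b c) n = \sum_(l < a.+1)
     if (6 * (a - l) + 31 * l + 8 * b + 10 * c == n)%N
     then 'C(a, l)%:R else 0.
Proof.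
have [/and3P[Ha Hb Hc] | out] := boolP [&& a <= n, b <= n & c <= n]%N; last first.
  rewrite [RHS]big1 => [|l _]; last first.
    by case: eqP => // E; move: out; have := ltn_ord l; lia.
  apply: big1 => i _; apply: big1 => j _; apply: big1 => k _; apply: big1 => l _.
  suff -> : mono3 R a b c i j k = 0 by rewrite mulr0 if_same.
  rewrite /mono3; case: eqP => [ia|]; case: eqP => [jb|]; case: eqP => [kc|] //.
  by move: out; have := ltn_ord i; have := ltn_ord j; have := ltn_ord k; lia.
rewrite /rho (big_ord_pred1 (Ha : a < n.+1)%N); last first.
  move=> i /negbTE ia; do 3!apply: big1 => ? _.
  by rewrite /mono3 ia mulr0 if_same.
rewrite (big_ord_pred1 (Hb : b < n.+1)%N); last first.
  move=> j /negbTE jb; do 2!apply: big1 => ? _.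
  by rewrite /mono3 jb andbF mulr0 if_same.
rewrite (big_ord_pred1 (Hc : c < n.+1)%N); last first.
  move=> k /negbTE kc; apply: big1 => ? _.
  by rewrite /mono3 kc andbF mulr0 if_same.
by apply: eq_bigr => l _; rewrite /mono3 /= !eqxx mulr1.
Qed.

Lemma rho_exponent45 {i j k l : nat} : (l <= i)%N ->
  (6 * (i - l) + 31 * l + 8 * j + 10 * k = 45)%N ->
  [/\ i = 2, j = 1, k = 0 & l = 1]%N.
Proof. by move=> li E; split; lia. Qed.

Lemma rho45 (R : pzRingType) (f : series3 R) : rho f 45 = 2 * f 2%N 1%N 0%N.
Proof.
have off45 i j k (l : 'I_i.+1) : ~~ [&& i == 2, j == 1, k == 0 & l == 1 :> nat]%N ->
    (if (6 * (i - l) + 31 * l + 8 * j + 10 * k == 45)%N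
     then 'C(i, l)%:R * f i j k else 0) = 0.
  move=> ne; case: eqP => // /(rho_exponent45 (ltn_ord l : l <= i)%N) [ei ej ek el].
  by rewrite el ej ek ei in ne.
rewrite /rho (big_ord_pred1 (isT : 2 < 46)%N); last first.
  by move=> i /negbTE i2; do 3!apply: big1 => ? _; rewrite off45 ?i2.
rewrite (big_ord_pred1 (isT : 1 < 46)%N); last first.
  by move=> j /negbTE j1; do 2!apply: big1 => ? _; rewrite off45 ?j1 ?andbF.
rewrite (big_ord_pred1 (isT : 0 < 46)%N); last first.
  by move=> k /negbTE k0; apply: big1 => ? _; rewrite off45 ?k0 ?andbF.
rewrite (big_ord_pred1 (isT : 1 < 3)%N) //.
by move=> l /negbTE l1; rewrite off45 ?l1 ?andbF.
Qed.

(* The cross term [2 t^45] vanishes mod 2; the others cancel in pairs: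
   [t^20] from [z^2] and [x^2 y], [t^70] from [x^2 y] and [y^5 z^3]. *)
Lemma phi_in_Pbar : inPbar (phi 'F_2).
Proof.
move=> n; rewrite /phi !rhoD !rho_mono3 !big_ord_recr !big_ord0 /=.
rewrite -[(6 * (0 - 0) + 31 * 0 + 8 * 0 + 10 * 2)%N]/20%N.
rewrite -[(6 * (2 - 0) + 31 * 0 + 8 * 1 + 10 * 0)%N]/20%N.
rewrite -[(6 * (2 - 1) + 31 * 1 + 8 * 1 + 10 * 0)%N]/45%N.
rewrite -[(6 * (2 - 2) + 31 * 2 + 8 * 1 + 10 * 0)%N]/70%N.
rewrite -[(6 * (0 - 0) + 31 * 0 + 8 * 5 + 10 * 3)%N]/70%N.
by case: (20 == n)%N; case: (45 == n)%N; case: (70 == n)%N; apply/eqP.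
Qed.

Lemma Ptilde_coef210 {f : series3 rat} : inPtilde f -> f 2%N 1%N 0%N = 0.
Proof.
by case=> _ /(_ 45%N); rewrite rho45 => /eqP; rewrite mulf_eq0 => /orP[|/eqP].
Qed.

Lemma phi_coef210 (R : pzRingType) : phi R 2 1 0 = 1.
Proof. by rewrite /phi /mono3 /= add0r addr0. Qed.

Lemma inZ2loc_double_neq1 q : inZ2loc q -> 2 * q != 1.
Proof.
move=> Zq; apply: contraTneq Zq => q2.
suff -> : q = 2^-1 by [].
by rewrite -[q](@mulKf _ 2) // q2 mulr1.
Qed.

Theorem mainTheorem8 :
  (~ exists (f g : series3 rat),
       inPtilde f /\ isZ2series g /\
       forall i j k, phi rat i j k = f i j k + 2 * g i j k)
  /\
  (~ forall h : series3 'F_2, inPbar h ->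
       exists f : series3 rat, inPtilde f /\
         forall i j k, h i j k = red2 (f i j k)).
Proof.
split.
  case=> f [g [Pf [Zg Ephi]]].
  have := Ephi 2%N 1%N 0%N; rewrite phi_coef210 (Ptilde_coef210 Pf) add0r => /esym/eqP.
  by apply/negP/inZ2loc_double_neq1.
move=> /(_ _ phi_in_Pbar) [f [Pf E]].
by have := E 2%N 1%N 0%N; rewrite phi_coef210 (Ptilde_coef210 Pf).
Qed.
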